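(* Let $G:\mathbb{R}^{d_x}\to\mathbb{R}$ be $\mu_x$-strongly convex and $L_x$-smooth, $F:\mathbb{R}^{d_y}\to\mathbb{R}\cup\{+\infty\}$ proper closed convex with conjugate $F^\star$, $K:\mathbb{R}^{d_x}\to\mathbb{R}^{d_y}$ linear, and $(x^\star,y^\star)$ a solution of $\min_x\max_y\{G(x)+\langle y,Kx\rangle-F^\star(y)\}$. Consider iterates of APDA with Inexact Prox (with any stepsizes $\eta_x,\eta_y,\beta_y>0$, $\theta\in[0,1]$ and any inner method, $\hat x^k\in\mathbb{R}^{d_x}$ being the point it returns), and let $w^{\star k}$ be the exact minimizer of $\Psi^k$. Then for all $k\ge0$ $(1+\frac{\mu_x\eta_x}{2})\frac1{\eta_x}\|x^{k+1}-x^\star\|^2\le\frac1{\eta_x}\|x^k-x^\star\|^2+(2\eta_x+\mu_x\eta_x^2)\|\nabla\Psi^k(\hat x^k)\|^2-\frac1{2\eta_x}\|x^k-w^{\star k}\|^2-2\langle K^\top\bar y^k-K^\top y^\star,\hat x^k-x^\star\rangle-\frac1{L_x}\|\nabla G(\hat x^k)-\nabla G(x^\star)\|^2.$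
   Context: $\mu_x$-strong convexity: $G(x')-G(x'')-\langle\nabla G(x''),x'-x''\rangle\ge\frac{\mu_x}{2}\|x'-x''\|^2$; $L_x$-smoothness: $\|\nabla G(x')-\nabla G(x'')\|\le L_x\|x'-x''\|$. A solution satisfies $\nabla G(x^\star)+K^\top y^\star=0$ and $0\in\partial F^\star(y^\star)-Kx^\star$. APDA with Inexact Prox: given $(x^0,y^0)$, $\bar y^0=y^0$, stepsizes $\eta_x,\eta_y,\beta_y>0$, $\theta\in[0,1]$, number of inner iterations $T$, inner method $\mathcal M$; for $k=0,1,\dots$: $\Psi^k(x)=G(x)+\frac{1}{2\eta_x}\|x-(x^k-\eta_xK^\top\bar y^k)\|^2$; $\hat x^k$ is the output of $T$ iterations of $\mathcal M$ applied to $\Psi^k$ (an approximate minimizer); $x^{k+1}=x^k-\eta_x(\nabla G(\hat x^k)+K^\top\bar y^k)$; $y^{k+1}=y^k-\eta_y(g^{k+1}-K\hat x^k)-\eta_y\beta_yK(K^\top y^k+\nabla G(\hat x^k))$ with $g^{k+1}\in\partial F^\star(y^{k+1})$; $\bar y^{k+1}=y^{k+1}+\theta(y^{k+1}-y^k)$. *)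

From HB Require Import structures.
From mathcomp Require Import all_boot all_order all_algebra.
From mathcomp Require Import all_classical all_reals all_analysis.
Set Implicit Arguments. Unset Strict Implicit. Unset Printing Implicit Defensive.
Import Order.TTheory GRing.Theory Num.Theory.
Import numFieldNormedType.Exports.
Local Open Scope classical_set_scope.
Local Open Scope ring_scope.

Section Defs.
Variable R : realType.

Definition dot n (u v : 'cV[R]_n) : R := \sum_(i < n) u i ord0 * v i ord0.
Definition sqnorm n (u : 'cV[R]_n) : R := dot u u.

Definition is_gradient n (G : 'cV[R]_n -> R) (gradG : 'cV[R]_n -> 'cV[R]_n) :=
  forall x, differentiable G x /\ forall v, 'D_v G x = dot (gradG x) v.

Definition strongly_convex n (mu : R) (G : 'cV[R]_n -> R) gradG :=
  forall x1 x2, G x1 - G x2 - dot (gradG x2) (x1 - x2) >= mu / 2 * sqnorm (x1 - x2).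

Definition smooth n (L : R) (gradG : 'cV[R]_n -> 'cV[R]_n) :=
  forall x1 x2, Num.sqrt (sqnorm (gradG x1 - gradG x2)) <= L * Num.sqrt (sqnorm (x1 - x2)).

Definition proper_fun n (F : 'cV[R]_n -> \bar R) :=
  (exists x, (F x < +oo)%E) /\ forall x, (-oo < F x)%E.

Definition convex_fun n (F : 'cV[R]_n -> \bar R) :=
  forall (x1 x2 : 'cV[R]_n) (t : R), 0 <= t <= 1 ->
    (F (t *: x1 + (1 - t) *: x2)%R <= t%:E * F x1 + (1 - t)%:E * F x2)%E.

Definition closed_fun n (F : 'cV[R]_n -> \bar R) :=
  closed [set p : 'cV[R]_n * R | (F p.1 <= p.2%:E)%E].

Definition conjugate n (F : 'cV[R]_n -> \bar R) : 'cV[R]_n -> \bar R :=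
  fun y => ereal_sup [set ((dot y x)%:E - F x)%E | x in [set: 'cV[R]_n]].

Definition subdiff n (F : 'cV[R]_n -> \bar R) (y : 'cV[R]_n) : set 'cV[R]_n :=
  [set g | F y \is a fin_num /\
           forall z, (F y + (dot g (z - y))%:E <= F z)%E].

Definition Psi dx dy (G : 'cV[R]_dx -> R) (K : 'M[R]_(dy, dx)) (eta : R)
    (xk : 'cV[R]_dx) (ybk : 'cV[R]_dy) (x : 'cV[R]_dx) : R :=
  G x + (2 * eta)^-1 * sqnorm (x - (xk - eta *: (K^T *m ybk))).

Definition gradPsi dx dy (gradG : 'cV[R]_dx -> 'cV[R]_dx) (K : 'M[R]_(dy, dx)) (eta : R)
    (xk : 'cV[R]_dx) (ybk : 'cV[R]_dy) (x : 'cV[R]_dx) : 'cV[R]_dx :=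
  gradG x + eta^-1 *: (x - (xk - eta *: (K^T *m ybk))).

End Defs.

(* Write h = xhat - xs, a = grad G(xhat) - grad G(xs), b = K^T (ybar - ys),
   e = grad Psi(xhat) and d = xhat - w.  Since grad G(xs) = - K^T ys, the
   iterates satisfy x^{k+1} - xs = h - eta e, x^k - xs = h - eta e + eta (a + b)
   and x^k - w = eta (a + b - e) + d, so the claim is a quadratic inequality in
   these five vectors.  It follows from two facts: strong convexity together
   with cocoercivity of the L-smooth gradient gives mu |h|^2 + |a|^2 / L <= 2 <h, a>,
   and Psi is (1/eta)-strongly convex, so its minimizer satisfies
   |xhat - w| <= eta |grad Psi(xhat)|.  The descent lemma behind cocoercivity is
   obtained without calculus, by summing the first-order convexity inequality
   along N equal steps and letting N go to infinity. *)

From mathcomp Require Import all_boot all_order all_algebra.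
From mathcomp Require Import all_classical all_reals all_analysis.
From mathcomp Require Import ring lra.
Set Implicit Arguments. Unset Strict Implicit.
Import Order.TTheory GRing.Theory Num.Theory.
Local Open Scope ring_scope.

Section InnerProduct.
Variables (R : realType) (n : nat).
Implicit Types (u v z : 'cV[R]_n) (s : R).

Lemma dotC u v : dot u v = dot v u.
Proof. by apply: eq_bigr => i _; rewrite mulrC. Qed.

Lemma dotDl u v z : dot (u + v) z = dot u z + dot v z.
Proof. by rewrite /dot -big_split; apply: eq_bigr => i _; rewrite !mxE mulrDl. Qed.

Lemma dotZl s u z : dot (s *: u) z = s * dot u z.
Proof. by rewrite /dot mulr_sumr; apply: eq_bigr => i _; rewrite !mxE mulrA. Qed.

Lemma dotNl u z : dot (- u) z = - dot u z.
Proof. by rewrite -scaleN1r dotZl mulN1r. Qed.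

Lemma dotBl u v z : dot (u - v) z = dot u z - dot v z.
Proof. by rewrite dotDl dotNl. Qed.

Lemma dotDr u v z : dot z (u + v) = dot z u + dot z v.
Proof. by rewrite dotC dotDl !(dotC z). Qed.

Lemma dotZr s u z : dot z (s *: u) = s * dot z u.
Proof. by rewrite dotC dotZl dotC. Qed.

Lemma dotNr u z : dot z (- u) = - dot z u.
Proof. by rewrite dotC dotNl dotC. Qed.

Lemma dotBr u v z : dot z (u - v) = dot z u - dot z v.
Proof. by rewrite dotDr dotNr. Qed.

Lemma sqnorm_ge0 u : 0 <= sqnorm u.
Proof. by apply: sumr_ge0 => i _; rewrite -expr2 sqr_ge0. Qed.

Lemma sqnormD u v : sqnorm (u + v) = sqnorm u + 2 * dot u v + sqnorm v.
Proof. by rewrite /sqnorm dotDl !dotDr (dotC v u); ring. Qed.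

Lemma sqnormB u v : sqnorm (u - v) = sqnorm u - 2 * dot u v + sqnorm v.
Proof. by rewrite /sqnorm dotBl !dotBr (dotC v u); ring. Qed.

Lemma sqnormZ s u : sqnorm (s *: u) = s ^+ 2 * sqnorm u.
Proof. by rewrite /sqnorm dotZl dotZr mulrA -expr2. Qed.

Lemma sqnormN u : sqnorm (- u) = sqnorm u.
Proof. by rewrite /sqnorm dotNl dotNr opprK. Qed.

Lemma dot_young s u v : 2 * s * dot u v <= sqnorm u + s ^+ 2 * sqnorm v.
Proof. by have := sqnorm_ge0 (u - s *: v); rewrite sqnormB sqnormZ dotZr; lra. Qed.

Lemma sqnormD_le u v : sqnorm (u + v) <= 2 * (sqnorm u + sqnorm v).
Proof. by have := dot_young 1 u v; rewrite sqnormD; lra. Qed.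

Lemma dot_le_sqnorm s u v :
  0 < s -> sqnorm u <= s ^+ 2 * sqnorm v -> dot u v <= s * sqnorm v.
Proof.
move=> s_gt0 uv; rewrite -(ler_pM2l (_ : 0 < 2 * s)) ?mulr_gt0 //.
by have := dot_young s u v; lra.
Qed.

End InnerProduct.

Lemma le0_of_le_div_nat (R : realType) (a c : R) :
  0 <= c -> (forall N : nat, a <= c / N.+1%:R) -> a <= 0.
Proof.
move=> c_ge0 a_le; apply/ler_addgt0Pr => e e_gt0; rewrite add0r.
have /archi_boundP := divr_ge0 c_ge0 (ltW e_gt0).
set N := Num.Def.archi_bound _ => ltN.
apply: le_trans (a_le N) _; rewrite ler_pdivrMr ?ltr0Sn //.
rewrite ltr_pdivrMr // in ltN.
by apply: (le_trans (ltW ltN)); rewrite mulrC ler_wpM2l ?(ltW e_gt0) ?ler_nat.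
Qed.

Section StronglyConvex.
Variables (R : realType) (n : nat).
Implicit Types (G : 'cV[R]_n -> R) (gradG : 'cV[R]_n -> 'cV[R]_n).

Lemma strongly_convex_le (mu1 mu2 : R) G gradG :
  mu1 <= mu2 -> strongly_convex mu2 G gradG -> strongly_convex mu1 G gradG.
Proof.
move=> le_mu G_sc x1 x2; apply: le_trans (G_sc x1 x2).
by rewrite ler_wpM2r ?sqnorm_ge0 ?ler_pM2r.
Qed.

Lemma convex_gradient_ge G gradG : strongly_convex 0 G gradG ->
  forall x1 x2, G x2 + dot (gradG x2) (x1 - x2) <= G x1.
Proof. by move=> G_cvx x1 x2; have := G_cvx x1 x2; rewrite mul0r mul0r; lra. Qed.

Lemma strongly_convex_add_sqdist G gradG (eta : R) (c : 'cV[R]_n) :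
  0 < eta -> strongly_convex 0 G gradG ->
  strongly_convex eta^-1 (fun x => G x + (2 * eta)^-1 * sqnorm (x - c))
                         (fun x => gradG x + eta^-1 *: (x - c)).
Proof.
move=> eta_gt0 G_cvx x1 x2 /=; have := convex_gradient_ge G_cvx x1 x2.
have -> : x1 - c = (x2 - c) + (x1 - x2) by rewrite [RHS]addrC addrA subrK.
by rewrite (sqnormD (x2 - c)) dotDl dotZl invfM; lra.
Qed.

Lemma strongly_convex_monotone (mu : R) G gradG : strongly_convex mu G gradG ->
  forall x1 x2, mu * sqnorm (x1 - x2) <= dot (gradG x1 - gradG x2) (x1 - x2).
Proof.
move=> G_sc x1 x2; have := G_sc x1 x2; have := G_sc x2 x1.
by rewrite -opprB sqnormN dotNr dotBl; lra.
Qed.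

Section Argmin.
Variables (mu : R) (G : 'cV[R]_n -> R) (gradG : 'cV[R]_n -> 'cV[R]_n) (w : 'cV[R]_n).
Hypothesis G_sc : strongly_convex mu G gradG.
Hypothesis w_min : forall z, G w <= G z.

Lemma strongly_convex_argmin_growth z : 0 <= mu -> G w + mu / 2 * sqnorm (z - w) <= G z.
Proof.
move=> mu_ge0; set S := sqnorm (z - w).
have S_ge0 : 0 <= mu / 2 * S by rewrite mulr_ge0 ?divr_ge0 ?sqnorm_ge0.
suff : G w + mu / 2 * S - G z <= 0 by lra.
apply: (le0_of_le_div_nat S_ge0) => N; set t := N.+1%:R^-1.
have t_gt0 : 0 < t by rewrite invr_gt0 ltr0Sn.
have t_le1 : t <= 1 by rewrite invf_le1 ?ltr0Sn // ler1n.
set m := w + t *: (z - w).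
have zm : z - m = (1 - t) *: (z - w) by rewrite /m scalerBl scale1r opprD addrA.
have wm : w - m = (- t) *: (z - w) by rewrite /m opprD addrA subrr add0r scaleNr.
have := G_sc z m; have := G_sc w m; have := w_min m.
rewrite zm wm !sqnormZ !dotZr -/S; set D := dot (gradG m) (z - w) => w_le_m sc_w sc_z.
have t1_ge0 : 0 <= 1 - t by rewrite subr_ge0.
rewrite -(ler_pM2l t_gt0).
have := ler_wpM2l (ltW t_gt0) sc_z; have := ler_wpM2l t1_ge0 sc_w; lra.
Qed.

Lemma strongly_convex_argmin_dist z : 0 < mu ->
  mu ^+ 2 * sqnorm (z - w) <= sqnorm (gradG z).
Proof.
move=> mu_gt0; have := strongly_convex_argmin_growth z (ltW mu_gt0).
have := G_sc w z; rewrite -opprB sqnormN dotNr => sc_wz growth.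
have gap : 2 * mu * (mu * sqnorm (z - w)) <= 2 * mu * dot (gradG z) (z - w).
  by rewrite ler_pM2l ?mulr_gt0 //; lra.
by have := dot_young mu (gradG z) (z - w); lra.
Qed.

End Argmin.

End StronglyConvex.

Lemma Psi_argmin_dist (R : realType) (dx dy : nat) (G : 'cV[R]_dx -> R) gradG
    (K : 'M[R]_(dy, dx)) (eta : R) (xk : 'cV[R]_dx) (ybk : 'cV[R]_dy) (w z : 'cV[R]_dx) :
  0 < eta -> strongly_convex 0 G gradG ->
  (forall u, Psi G K eta xk ybk w <= Psi G K eta xk ybk u) ->
  sqnorm (z - w) <= eta ^+ 2 * sqnorm (gradPsi gradG K eta xk ybk z).
Proof.
move=> eta_gt0 G_cvx w_min.
have Psi_sc := strongly_convex_add_sqdist (xk - eta *: (K^T *m ybk)) eta_gt0 G_cvx.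
have etaV_gt0 : 0 < eta^-1 by rewrite invr_gt0.
have := strongly_convex_argmin_dist Psi_sc w_min z etaV_gt0.
by rewrite exprVn -(ler_pM2l (exprn_gt0 2 eta_gt0)) mulrA divff ?mul1r // gt_eqF ?exprn_gt0.
Qed.

Section Smooth.
Variables (R : realType) (n : nat) (L : R) (G : 'cV[R]_n -> R) (gradG : 'cV[R]_n -> 'cV[R]_n).
Hypothesis L_gt0 : 0 < L.
Hypothesis G_cvx : strongly_convex 0 G gradG.
Hypothesis G_smooth : smooth L gradG.

Lemma smooth_sqnorm x1 x2 : sqnorm (gradG x1 - gradG x2) <= L ^+ 2 * sqnorm (x1 - x2).
Proof.
have le_sqrt := G_smooth x1 x2.
have := ler_pM (sqrtr_ge0 _) (sqrtr_ge0 _) le_sqrt le_sqrt.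
by rewrite mulrACA -!expr2 !sqr_sqrtr ?sqnorm_ge0.
Qed.

Lemma descent_nat x d (m : nat) :
  G (x + m%:R *: d) <= G x + m%:R * dot (gradG x) d + L * (m%:R * m.+1%:R) / 2 * sqnorm d.
Proof.
elim: m => [|m IH]; first by rewrite scale0r !(mul0r, mulr0, addr0).
set xm := x + m%:R *: d.
have -> : x + m.+1%:R *: d = xm + d by rewrite -natr1 scalerDl scale1r addrA.
have := convex_gradient_ge G_cvx xm (xm + d).
rewrite opprD addrA subrr add0r dotNr => step.
have dist : xm + d - x = m.+1%:R *: d.
  by rewrite /xm addrAC (addrC x) addrK -natr1 scalerDl scale1r.
have := smooth_sqnorm (xm + d) x.
rewrite dist sqnormZ mulrA -exprMn => /dot_le_sqnorm lip.
have {}lip := lip (mulr_gt0 L_gt0 (ltr0Sn _ _)).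
rewrite dotBl in lip.
rewrite -/xm -[m.+1%:R]natr1 in IH lip.
by rewrite -[m.+2%:R]natr1 -[m.+1%:R]natr1; lra.
Qed.

Lemma descent x d : G (x + d) <= G x + dot (gradG x) d + L / 2 * sqnorm d.
Proof.
have c_ge0 : 0 <= L / 2 * sqnorm d by rewrite mulr_ge0 ?divr_ge0 ?sqnorm_ge0 ?ltW.
suff : G (x + d) - G x - dot (gradG x) d - L / 2 * sqnorm d <= 0 by lra.
apply: (le0_of_le_div_nat c_ge0) => N.
have := descent_nat x (N.+1%:R^-1 *: d) N.+1.
have N1_neq0 : N.+1%:R != 0 :> R by rewrite pnatr_eq0.
rewrite scalerA mulfV // scale1r dotZr sqnormZ mulrA mulfV // mul1r -[N.+2%:R]natr1.
set t : R := N.+1%:R in N1_neq0 *.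
have -> : L * (t * (t + 1)) / 2 * (t^-1 ^+ 2 * sqnorm d)
          = L / 2 * sqnorm d + L / 2 * sqnorm d / t by field.
by set u := _ / t; lra.
Qed.

Lemma smooth_convex_gap x y :
  L^-1 / 2 * sqnorm (gradG y - gradG x) <= G y - G x - dot (gradG x) (y - x).
Proof.
set g := gradG y - gradG x.
have lower := convex_gradient_ge G_cvx (y - L^-1 *: g) x.
rewrite [y - _ - x]addrAC dotBr dotZr in lower.
have := descent y (- (L^-1 *: g)).
rewrite dotNr dotZr sqnormN sqnormZ.
have -> : L / 2 * (L^-1 ^+ 2 * sqnorm g) = L^-1 / 2 * sqnorm g by field; rewrite gt_eqF.
have : L^-1 * sqnorm g = L^-1 * dot (gradG y) g - L^-1 * dot (gradG x) g.
  by rewrite -mulrBr /sqnorm {1}/g dotBl.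
lra.
Qed.

Lemma cocoercive x y :
  L^-1 * sqnorm (gradG y - gradG x) <= dot (gradG y - gradG x) (y - x).
Proof.
have := smooth_convex_gap x y; have := smooth_convex_gap y x.
by rewrite -[gradG x - _]opprB -[x - y]opprB sqnormN dotNr dotBl; lra.
Qed.

End Smooth.

Lemma primal_step_bound (R : realType) n (mu c eta : R) (h a b e d : 'cV[R]_n) :
  0 <= mu -> 0 < eta ->
  mu * sqnorm h + c * sqnorm a <= 2 * dot h a ->
  sqnorm d <= eta ^+ 2 * sqnorm e ->
  (1 + mu * eta / 2) * eta^-1 * sqnorm (h - eta *: e)
  <= eta^-1 * sqnorm (h - eta *: e + eta *: (a + b))
     + (2 * eta + mu * eta ^+ 2) * sqnorm e
     - (2 * eta)^-1 * sqnorm (eta *: (a + b - e) + d)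
     - 2 * dot b h - c * sqnorm a.
Proof.
move=> mu_ge0 eta_gt0 ha_le d_le.
have U_le : sqnorm (h - eta *: e) <= 2 * (sqnorm h + eta ^+ 2 * sqnorm e).
  by have := sqnormD_le h (- (eta *: e)); rewrite sqnormN sqnormZ.
have S_le : sqnorm (eta *: (a + b - e) + d)
            <= 2 * (eta ^+ 2 * (sqnorm (a + b) - 2 * dot e (a + b) + sqnorm e) + sqnorm d).
  by have := sqnormD_le (eta *: (a + b - e)) d; rewrite sqnormZ sqnormB dotC.
rewrite (sqnormD (h - eta *: e)) dotZr dotBl dotZl dotDr sqnormZ (dotC b).
set U := sqnorm (h - eta *: e) in U_le *.
set S := sqnorm (eta *: (a + b - e) + d) in S_le *.
rewrite -subr_ge0; set gap := (X in 0 <= X).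
have -> : gap = eta^-1 * (2 * eta * dot h a - 2 * eta ^+ 2 * dot e (a + b)
    + eta ^+ 2 * sqnorm (a + b) + (2 * eta ^+ 2 + mu * eta ^+ 3) * sqnorm e
    - S / 2 - eta * c * sqnorm a - mu * eta / 2 * U).
  by rewrite /gap; field; rewrite gt_eqF.
rewrite pmulr_rge0 ?invr_gt0 //.
have mueta_ge0 : 0 <= mu * eta / 2 by nra.
have := ler_wpM2l mueta_ge0 U_le; have := ler_wpM2l (ltW eta_gt0) ha_le.
lra.
Qed.

Theorem lemma9 (R : realType) (dx dy : nat)
  (G : 'cV[R]_dx -> R) (gradG : 'cV[R]_dx -> 'cV[R]_dx) (mux Lx : R)
  (F : 'cV[R]_dy -> \bar R) (K : 'M[R]_(dy, dx))
  (xs : 'cV[R]_dx) (ys : 'cV[R]_dy)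
  (etax etay betay theta : R)
  (x xhat w : nat -> 'cV[R]_dx) (y ybar g : nat -> 'cV[R]_dy) :
  0 < mux -> 0 < Lx ->
  is_gradient G gradG -> strongly_convex mux G gradG -> smooth Lx gradG ->
  proper_fun F -> convex_fun F -> closed_fun F ->
  (* (xs, ys) solves the saddle point problem *)
  gradG xs + K^T *m ys = 0 -> K *m xs \in subdiff (conjugate F) ys ->
  0 < etax -> 0 < etay -> 0 < betay -> 0 <= theta <= 1 ->
  (* APDA with inexact prox; xhat k is an arbitrary output of the inner method *)
  ybar 0%N = y 0%N ->
  (forall k, x k.+1 = x k - etax *: (gradG (xhat k) + K^T *m ybar k)) ->
  (forall k, g k.+1 \in subdiff (conjugate F) (y k.+1)) ->
  (forall k, y k.+1 = y k - etay *: (g k.+1 - K *m xhat k)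
                      - (etay * betay) *: (K *m (K^T *m y k + gradG (xhat k)))) ->
  (forall k, ybar k.+1 = y k.+1 + theta *: (y k.+1 - y k)) ->
  (* w k is the exact minimizer of Psi^k *)
  (forall k z, Psi G K etax (x k) (ybar k) (w k) <= Psi G K etax (x k) (ybar k) z) ->
  forall k : nat,
    (1 + mux * etax / 2) * etax^-1 * sqnorm (x k.+1 - xs)
    <= etax^-1 * sqnorm (x k - xs)
       + (2 * etax + mux * etax ^+ 2) * sqnorm (gradPsi gradG K etax (x k) (ybar k) (xhat k))
       - (2 * etax)^-1 * sqnorm (x k - w k)
       - 2 * dot (K^T *m ybar k - K^T *m ys) (xhat k - xs)
       - Lx^-1 * sqnorm (gradG (xhat k) - gradG xs).
Proof.
move=> mu_gt0 L_gt0 _ G_sc G_smooth _ _ _ opt _ eta_gt0 _ _ _ _ x_step _ _ _ w_min k.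
have G_cvx := strongly_convex_le (ltW mu_gt0) G_sc.
have grad_xs : gradG xs = - (K^T *m ys) by apply/eqP; rewrite -addr_eq0 opt.
set h := xhat k - xs; set a := gradG (xhat k) - gradG xs.
set b := K^T *m ybar k - K^T *m ys; set e := gradPsi gradG K etax (x k) (ybar k) (xhat k).
have ha_le : mux * sqnorm h + Lx^-1 * sqnorm a <= 2 * dot h a.
  have := strongly_convex_monotone G_sc (xhat k) xs.
  by have := cocoercive L_gt0 G_cvx G_smooth xs (xhat k); rewrite -/a -/h (dotC h); lra.
have eta_neq0 : etax != 0 by rewrite gt_eqF.
have -> : x k.+1 - xs = h - etax *: e.
  by rewrite x_step /h /e /gradPsi; apply/matrixP => i j; rewrite !mxE; field.
have -> : x k - xs = h - etax *: e + etax *: (a + b).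
  by rewrite /h /e /a /b /gradPsi grad_xs; apply/matrixP => i j; rewrite !mxE; field.
have -> : x k - w k = etax *: (a + b - e) + (xhat k - w k).
  by rewrite /e /a /b /gradPsi grad_xs; apply/matrixP => i j; rewrite !mxE; field.
exact: primal_step_bound (ltW mu_gt0) eta_gt0 ha_le (Psi_argmin_dist _ eta_gt0 G_cvx (w_min k)).
Qed.
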